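(* Let $\mathcal N$ be a single-mode phase-insensitive $s$-sender bosonic Gaussian multiple-access channel that is global covariant ($\delta_k=0$ for all $k$) or global contravariant ($\delta_k=1$ for all $k$). Then $\mathcal N=\Psi\circ\mathcal B$, where $\mathcal B$ is a passive linear-optical (beamsplitter) map taking the $s$ input modes to the single mode $\hat a_{\rm mix}=\sum_k v_k\hat a_{A_k}$ for a unit vector $v\in\mathbb C^s$ (discarding the other output ports), and $\Psi$ is a single-mode phase-insensitive bosonic Gaussian channel that is covariant in the global covariant case and contravariant in the global contravariant case.
   Context: Single-mode phase-insensitive bosonic Gaussian MAC: sender $k$ controls one mode $A_k$; the output is $\hat a_B=\sum_{k=1}^sw_k((1-\delta_k)\hat a_{A_k}+\delta_k\hat a^\dagger_{A_k})+u_1\hat a_{E',1}+u_2\hat a^\dagger_{E',2}$ with $w_k\in\mathbb C$, $\delta_k\in\{0,1\}$, $u_1,u_2\ge0$, environment modes in vacuum, $\sum_k(1-2\delta_k)|w_k|^2+u_1^2-u_2^2=1$. A single-mode phase-insensitive bosonic Gaussian channel is $\hat a_{\rm out}=w((1-\delta)\hat a_{\rm in}+\delta\hat a^\dagger_{\rm in})+u_1\hat e_1+u_2\hat e_2^\dagger$ with vacuum environment modes and $(1-2\delta)|w|^2+u_1^2-u_2^2=1$; covariant if $\delta=0$, contravariant if $\delta=1$. *)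

(* Complex numbers are R[i] (mathcomp-real-closed) over an
   arbitrary real closed field R (the physical case is R = the reals). *)
From HB Require Import structures.
From mathcomp Require Import all_boot all_order all_algebra.
From mathcomp Require Import complex.
Set Implicit Arguments. Unset Strict Implicit. Unset Printing Implicit Defensive.
Import Order.TTheory GRing.Theory Num.Theory.
Local Open Scope ring_scope.

(* Modes of the problem: the s sender modes A_k (inl k) and two vacuum
   environment modes E_1 = inr false, E_2 = inr true. *)
Definition mode (s : nat) := ('I_s + bool)%type.
Definition modeA {s : nat} (k : 'I_s) : mode s := inl k.
Definition modeE1 {s : nat} : mode s := inr false.
Definition modeE2 {s : nat} : mode s := inr true.

(* A linear operator expression  sum_m (c_m a_m + d_m a_m^dagger):
   coefficient of (m, false) is that of a_m, of (m, true) that of a_m^dagger. *)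
Definition opexpr (R : rcfType) (s : nat) := {ffun (mode s * bool) -> R[i]}.

Definition ann (R : rcfType) (s : nat) (m : mode s) : opexpr R s :=
  [ffun p => ((p.1 == m) && ~~ p.2)%:R].

Definition dag (R : rcfType) (s : nat) (X : opexpr R s) : opexpr R s :=
  [ffun p => Num.conj (X (p.1, ~~ p.2))].

Definition cre (R : rcfType) (s : nat) (m : mode s) : opexpr R s := dag (ann R m).

Definition mac_out (R : rcfType) (s : nat) (w : 'I_s -> R[i]) (delta : 'I_s -> bool)
  (u1 u2 : R) : opexpr R s :=
  \sum_(k < s) w k *: ((1 - (delta k)%:R) *: ann R (modeA k)
                        + (delta k)%:R *: cre R (modeA k))
  + (real_complex R u1) *: ann R modeE1 + (real_complex R u2) *: cre R modeE2.

(* Physicality constraint of the MAC (u1,u2 >= 0 and the CCR condition). *)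
Definition mac_valid (R : rcfType) (s : nat) (w : 'I_s -> R[i]) (delta : 'I_s -> bool)
  (u1 u2 : R) : Prop :=
  0 <= u1 /\ 0 <= u2 /\
  \sum_(k < s) (1 - 2 * (delta k)%:R) * `|w k| ^+ 2 + (real_complex R u1) ^+ 2 - (real_complex R u2) ^+ 2 = 1.

Definition psi_out (R : rcfType) (s : nat) (w : R[i]) (delta : bool) (u1 u2 : R)
  (X : opexpr R s) : opexpr R s :=
  w *: ((1 - delta%:R) *: X + delta%:R *: dag X)
  + (real_complex R u1) *: ann R modeE1 + (real_complex R u2) *: cre R modeE2.

Definition psi_valid (R : rcfType) (w : R[i]) (delta : bool) (u1 u2 : R) : Prop :=
  0 <= u1 /\ 0 <= u2 /\
  (1 - 2 * delta%:R) * `|w| ^+ 2 + (real_complex R u1) ^+ 2 - (real_complex R u2) ^+ 2 = 1.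

(* Output mode of the beamsplitter map B: a_mix = sum_k v_k a_{A_k}
   (the other output ports being discarded). *)
Definition mix (R : rcfType) (s : nat) (v : 'I_s -> R[i]) : opexpr R s :=
  \sum_(k < s) v k *: ann R (modeA k).

Definition unit_vec (R : rcfType) (s : nat) (v : 'I_s -> R[i]) : Prop :=
  \sum_(k < s) `|v k| ^+ 2 = 1.

From HB Require Import structures.
From mathcomp Require Import all_boot all_order all_algebra.
From mathcomp Require Import complex.
Import Order.TTheory GRing.Theory Num.Theory.
Local Open Scope ring_scope.

(* When all the senders enter with the same type b, the MAC output is
   sum_k w_k a_{A_k} (+ environment) for b = covariant, and its conjugate-linear
   analogue sum_k w_k a_{A_k}^dag for b = contravariant.  Writing the coefficient
   vector (w_k), resp. (conj w_k), as N v with N = its Euclidean norm and v a unit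
   vector, the signal part is N a_mix, resp. N a_mix^dag, with a_mix = sum_k v_k a_{A_k}.
   So the MAC is the single-mode channel with gain N and the same environment
   applied to a_mix, and the MAC constraint becomes the single-mode one since
   N^2 = sum_k |w_k|^2. *)

Section Dagger.
Context {R : rcfType} {s : nat}.

Lemma dag0 : dag (0 : opexpr R s) = 0.
Proof. by apply/ffunP => p; rewrite !ffunE rmorph0. Qed.

Lemma dagD (X Y : opexpr R s) : dag (X + Y) = dag X + dag Y.
Proof. by apply/ffunP => p; rewrite !ffunE rmorphD. Qed.

Lemma dagZ (a : R[i]) (X : opexpr R s) : dag (a *: X) = Num.conj a *: dag X.
Proof. by apply/ffunP => p; rewrite !ffunE rmorphM. Qed.

Lemma dag_sum (n : nat) (F : 'I_n -> opexpr R s) :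
  dag (\sum_(k < n) F k) = \sum_(k < n) dag (F k).
Proof. exact: (big_morph _ dagD dag0). Qed.

Lemma dag_mix (v : 'I_s -> R[i]) :
  dag (mix v) = \sum_(k < s) Num.conj (v k) *: cre R (modeA k).
Proof. by rewrite dag_sum; apply: eq_bigr => k _; rewrite dagZ. Qed.

End Dagger.

Section UnitVector.
Context {R : rcfType} {s : nat}.

Definition vnorm (x : 'I_s -> R[i]) : R[i] := sqrtC (\sum_(k < s) `|x k| ^+ 2).

Lemma vnorm_ge0 (x : 'I_s -> R[i]) : 0 <= vnorm x.
Proof. by rewrite sqrtC_ge0 sumr_ge0 // => k _; rewrite exprn_ge0. Qed.

Lemma conj_vnorm (x : 'I_s -> R[i]) : Num.conj (vnorm x) = vnorm x.
Proof. exact/geC0_conj/vnorm_ge0. Qed.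

Lemma vnorm_sqr (x : 'I_s -> R[i]) :
  `|vnorm x| ^+ 2 = \sum_(k < s) `|x k| ^+ 2.
Proof. by rewrite ger0_norm ?vnorm_ge0 // sqrtCK. Qed.

Lemma vnorm_eq0 {x : 'I_s -> R[i]} : vnorm x = 0 -> forall k, x k = 0.
Proof.
move=> /(congr1 (fun z => z ^+ 2)); rewrite sqrtCK expr0n /= => /eqP.
rewrite psumr_eq0 => [/allP x0 k|k _]; last exact: exprn_ge0.
by have /= := x0 k (mem_index_enum k); rewrite sqrf_eq0 normr_eq0 => /eqP.
Qed.

(* For x = 0 any unit vector will do; [s > 0] guarantees one exists. *)
Lemma polar_decomp (x : 'I_s -> R[i]) : (0 < s)%N ->
  exists v : 'I_s -> R[i], unit_vec v /\ forall k, x k = vnorm x * v k.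
Proof.
move=> s_gt0; have [x0|xn0] := eqVneq (vnorm x) 0.
  exists (fun k => (k == Ordinal s_gt0)%:R); split; last first.
    by move=> k; rewrite x0 mul0r (vnorm_eq0 x0 k).
  rewrite /unit_vec (bigD1 (Ordinal s_gt0)) //= normr1 expr1n big1 ?addr0 //.
  by move=> k /negbTE ->; rewrite normr0 expr0n.
exists (fun k => x k / vnorm x); split; last by move=> k; rewrite mulrC divfK.
have nx2 : `|vnorm x| ^+ 2 != 0 by rewrite expf_neq0 ?normr_eq0.
rewrite /unit_vec; under eq_bigr do rewrite normrM normfV exprMn exprVn.
by rewrite -mulr_suml -vnorm_sqr divff.
Qed.

End UnitVector.

Section SingleTypeMAC.
Context {R : rcfType} {s : nat} {w : 'I_s -> R[i]} {delta : 'I_s -> bool}.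
Context {u1 u2 : R} {b : bool}.
Hypothesis delta_b : forall k, delta k = b.

Lemma mac_out_psi_out_mix {c : R[i]} {v : 'I_s -> R[i]} :
  (forall k, w k = c * (if b then Num.conj (v k) else v k)) ->
  mac_out w delta u1 u2 = psi_out c b u1 u2 (mix v).
Proof.
move=> wE; rewrite /mac_out /psi_out; congr (_ + _ + _).
under eq_bigr do rewrite delta_b wE.
case: b delta_b wE => _ _ /=; rewrite ?subrr ?subr0 !scale0r ?add0r ?addr0 !scale1r.
all: rewrite ?dag_mix /mix scaler_sumr; apply: eq_bigr => k _.
all: by rewrite scale0r ?add0r ?addr0 scale1r scalerA.
Qed.

Lemma mac_valid_psi_valid {c : R[i]} :
  mac_valid w delta u1 u2 ->
  `|c| ^+ 2 = \sum_(k < s) `|w k| ^+ 2 -> psi_valid c b u1 u2.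
Proof.
move=> [u1_ge0 [u2_ge0 ccr]] c2; do 2!split => //.
rewrite c2 mulr_sumr; apply: etrans ccr; congr (_ + _ - _).
by apply: eq_bigr => k _; rewrite delta_b.
Qed.

End SingleTypeMAC.

Theorem lemma1 (R : rcfType) (s : nat) (w : 'I_s -> R[i]) (delta : 'I_s -> bool)
  (u1 u2 : R) (b : bool) :
  (0 < s)%N ->
  mac_valid w delta u1 u2 ->
  (forall k, delta k = b) ->
  exists v : 'I_s -> R[i], unit_vec v /\
    exists (w' : R[i]) (u1' u2' : R),
      psi_valid w' b u1' u2' /\
      mac_out w delta u1 u2 = psi_out w' b u1' u2' (mix v).
Proof.
move=> s_gt0 valid delta_b.
pose x k := if b then Num.conj (w k) else w k.
have [v [unit_v xE]] := polar_decomp x s_gt0.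
have wE k : w k = vnorm x * (if b then Num.conj (v k) else v k).
  move: (xE k); rewrite /x; case: (b) => [xkE|//].
  by rewrite -[w k]conjCK xkE rmorphM /= conj_vnorm.
have x2 : `|vnorm x| ^+ 2 = \sum_(k < s) `|w k| ^+ 2.
  by rewrite vnorm_sqr; apply: eq_bigr => k _; rewrite /x; case: (b); rewrite ?norm_conjC.
exists v; split => //; exists (vnorm x), u1, u2; split.
  exact: (mac_valid_psi_valid delta_b valid x2).
exact: (mac_out_psi_out_mix delta_b wE).
Qed.
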